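(* Let $n\ge2$, $k\ge1$, and let $\partial_k$ denote the distance in $H_{n,k}$. Let $\mathbf z^{01}=x_1\ldots x_k$ be any vertex with $x_i=0$ for all odd $i$ and $x_i\neq0$ for all even $i$, and let $\mathbf z^{10}=x_1\ldots x_k$ be any vertex with $x_i\ne0$ for all odd $i$ and $x_i=0$ for all even $i$. Then (a) $\partial_k(\mathbf z^{01},\mathbf r)=\partial_k(\mathbf z^{10},P)=k-1$; (b) $\partial_k(\mathbf z^{10},\mathbf r)=\partial_k(\mathbf z^{01},P)=k$.
   Context: Let $n\ge 2$ and $k\ge 1$ be integers. $H_{n,k}$ is the simple undirected graph with vertex set $V_{n,k}=\mathbb{Z}_n^k$ (so $|V_{n,k}|=n^k$), whose vertices are written as strings $x_1x_2\ldots x_k$ with $x_j\in\mathbb{Z}_n=\{0,1,\ldots,n-1\}$. Two distinct vertices are adjacent if and only if they are related by one of the following rules. For $i=0$ the prefix $x_1\ldots x_i$ is empty, and ''$0\ldots0$'' denotes a string of zeros completing the word to length $k$. (R1) $x_1\ldots x_{k-1}x_k\sim x_1\ldots x_{k-1}y_k$ whenever $y_k\neq x_k$. (R2) For $0\le i\le k-2$: $x_1\ldots x_i0\ldots0\sim x_1\ldots x_ix_{i+1}\ldots x_k$ whenever $x_j\neq 0$ for all $i+1\le j\le k$. (R3) For $1\le i\le k-1$: $x_1\ldots x_{i-1}x_i0\ldots0\sim x_1\ldots x_{i-1}y_i0\ldots0$ whenever $x_i,y_i\neq0$ and $x_i\ne y_i$. In particular, $H_{n,1}$ is the complete graph $K_n$.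 The root of $H_{n,k}$ is $\mathbf r=00\ldots0$; a vertex of $H_{n,k}$ is peripheral if all its coordinates are nonzero, and $P$ denotes the set of peripheral vertices. For a vertex $\mathbf x$ and a vertex set $U$, $\partial(\mathbf x,U)=\min_{\mathbf u\in U}\partial(\mathbf x,\mathbf u)$. *)

From mathcomp Require Import all_boot.
Set Implicit Arguments. Unset Strict Implicit. Unset Printing Implicit Defensive.

(* Vertices of H_{n,k}: words x_1..x_k over Z_n, encoded as finite functions
   'I_k -> 'I_n; paper position i (1-based) is ordinal index i-1. *)
Definition V (n k : nat) := {ffun 'I_k -> 'I_n}.

Definition isz n (a : 'I_n) : bool := val a == 0.

Definition R1 n k (x y : V n k) : bool :=
  [forall j : 'I_k, (j.+1 < k) ==> (x j == y j)].

(* (R2) with prefix length p = i, 0 <= p <= k-2 :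
   x = x_1..x_p 0..0  and  y = x_1..x_p y_{p+1}..y_k with all y_j <> 0. *)
Definition R2 n k (x y : V n k) : bool :=
  [exists p : 'I_k, (p.+2 <= k) &&
    [forall j : 'I_k, ((j < p) ==> (x j == y j)) &&
                      ((p <= j) ==> (isz (x j) && ~~ isz (y j)))]].

(* (R3) with i = p+1, 1 <= i <= k-1 :
   x = x_1..x_{i-1} x_i 0..0, y = x_1..x_{i-1} y_i 0..0, x_i,y_i <> 0, x_i <> y_i. *)
Definition R3 n k (x y : V n k) : bool :=
  [exists p : 'I_k, (p.+1 < k) &&
    [&& ~~ isz (x p), ~~ isz (y p), x p != y p &
     [forall j : 'I_k, ((j < p) ==> (x j == y j)) &&
                       ((p < j) ==> (isz (x j) && isz (y j)))]]].

Definition Hadj n k : rel (V n k) := fun x y =>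
  (x != y) && [|| R1 x y, R2 x y, R2 y x, R3 x y | R3 y x].

Fixpoint walk_le (T : finType) (e : rel T) (d : nat) (x y : T) : bool :=
  if d is d'.+1 then (x == y) || [exists z, e x z && walk_le e d' z y]
  else x == y.

(* graph distance: the least d with a walk of length <= d (walks of length
   <= #|T| suffice in a finite graph; #|T|.+1 if unreachable). *)
Definition gdist (T : finType) (e : rel T) (x y : T) : nat :=
  find (fun d => walk_le e d x y) (iota 0 #|T|.+1).

Definition gdist_set (T : finType) (e : rel T) (x : T) (U : {set T}) : nat :=
  \big[minn/#|T|.+1]_(u in U) gdist e x u.

Definition root_vx n k (hn : 0 < n) : V n k := [ffun _ => Ordinal hn].

Definition periph n k : {set V n k} := [set x : V n k | [forall j : 'I_k, ~~ isz (x j)]].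

From mathcomp Require Import all_boot zify.
Set Implicit Arguments. Unset Strict Implicit. Unset Printing Implicit Defensive.

(* Scanning a word from its last letter, [depths] computes a pair of lower
   bounds for its distances to the root and to the periphery.  Both
   coordinates change by at most 1 along an edge: an edge of H_{n,k} only
   alters a suffix of the word, and rules R1-R3 alter it in a way the scan
   absorbs.  On the alternating words z01 and z10 the pair is (k-1, k),
   resp. (k, k-1), and walks of exactly these lengths exist: replace the
   suffix from position s by a block of zeros or of nonzeros, for
   s = k-1, k-2, ..., each step being an edge by R2 (or R1 for s = k-1). *)

Lemma big_minn_le (I : finType) (P : pred I) (F : I -> nat) m i :
  P i -> \big[minn/m]_(j | P j) F j <= F i.
Proof.
move=> Pi; rewrite -big_filter.
have : i \in [seq j <- index_enum I | P j] by rewrite mem_filter Pi mem_index_enum.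
elim: (filter _ _) => //= j s IHs; rewrite inE big_cons => /predU1P[<-|/IHs].
  exact: geq_minl.
exact: leq_trans (geq_minr _ _).
Qed.

Section GraphDistance.

Variables (T : finType) (e : rel T).

Definition lipschitz (f : T -> nat) := forall x y, e x y -> f x <= (f y).+1.

Lemma walk_le_path (w : nat -> T) d :
  (forall i, i < d -> e (w i.+1) (w i)) -> walk_le e d (w d) (w 0).
Proof.
elim: d => [|d IHd] ew //=; apply/orP; right; apply/existsP; exists (w d).
by rewrite ew // IHd // => i lt_id; apply: ew; apply: ltnW.
Qed.

Lemma walk_le_lipschitz f d x y :
  lipschitz f -> walk_le e d x y -> f x <= f y + d.
Proof.
move=> lip_f; elim: d x => [|d IHd] x /=; first by move/eqP->; rewrite addn0.
case/orP => [/eqP->|/existsP[z /andP[exz /IHd le_zy]]]; first exact: leq_addr.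
by apply: leq_trans (lip_f _ _ exz) _; rewrite addnS ltnS.
Qed.

Lemma gdist_le_walk d x y : walk_le e d x y -> d <= #|T| -> gdist e x y <= d.
Proof.
move=> wxy le_dT; rewrite /gdist leqNgt; apply/negP => /(before_find 0).
by rewrite nth_iota ?ltnS // add0n wxy.
Qed.

Lemma gdist_ge_walks L x y :
  (forall d, walk_le e d x y -> L <= d) -> L <= #|T|.+1 -> L <= gdist e x y.
Proof.
rewrite /gdist; set s := iota 0 #|T|.+1 => walk_ge le_LT.
have [has_walk|] := boolP (has (fun d => walk_le e d x y) s).
  apply: walk_ge; move: (nth_find 0 has_walk).
  by rewrite nth_iota ?add0n // -(size_iota 0 #|T|.+1) -has_find.
by move/hasNfind->; rewrite size_iota.
Qed.

Lemma gdist_certificate f d x y :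
  lipschitz f -> d <= f x - f y -> walk_le e d x y -> d <= #|T| ->
  gdist e x y = d.
Proof.
move=> lip_f drop_f wxy le_dT; apply/eqP; rewrite eqn_leq gdist_le_walk //=.
apply: gdist_ge_walks (leqW le_dT) => d' /(walk_le_lipschitz lip_f) le_fd'.
by apply: leq_trans drop_f _; rewrite leq_subLR.
Qed.

Lemma gdist_set_certificate f d x u (U : {set T}) :
  lipschitz f -> {in U, forall v, d <= f x - f v} ->
  u \in U -> walk_le e d x u -> d <= #|T| -> gdist_set e x U = d.
Proof.
move=> lip_f drop_f Uu wxu le_dT; apply/eqP; rewrite eqn_leq; apply/andP; split.
  apply: leq_trans (gdist_le_walk wxu le_dT); exact: big_minn_le.
apply: (big_ind (fun m => d <= m)) => [|m1 m2|v Uv]; first exact: leqW.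
  by rewrite leq_min => -> ->.
apply: gdist_ge_walks (leqW le_dT) => d' /(walk_le_lipschitz lip_f) le_fd'.
by apply: leq_trans (drop_f v Uv) _; rewrite leq_subLR.
Qed.

End GraphDistance.

Definition depth_step (a : nat) (s : nat * nat) : nat * nat :=
  if a == 0 then (s.1, s.1.+1) else (s.2.+1, s.2).

Definition depths (w : seq nat) : nat * nat := foldr depth_step (0, 0) w.

Definition near (s t : nat * nat) : bool :=
  [&& s.1 <= t.1.+1, t.1 <= s.1.+1, s.2 <= t.2.+1 & t.2 <= s.2.+1].

Lemma near_refl : reflexive near.
Proof. by move=> [s1 s2]; rewrite /near /= !leqnSn. Qed.

Lemma near_sym : symmetric near.
Proof. by move=> [s1 s2] [t1 t2]; rewrite /near /=; apply/and4P/and4P => -[]. Qed.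

Lemma near_depth_step a s t : near s t -> near (depth_step a s) (depth_step a t).
Proof.
case: s t => [s1 s2] [t1 t2]; rewrite /near /depth_step /=.
by case: eqP => _ /= /and4P[? ? ? ?]; apply/and4P; split.
Qed.

Lemma near_depths_cat u w1 w2 :
  near (depths w1) (depths w2) -> near (depths (u ++ w1)) (depths (u ++ w2)).
Proof. by elim: u => //= a u IHu /IHu; apply: near_depth_step. Qed.

Lemma near_depths_short w1 w2 :
  size w1 <= 1 -> size w2 <= 1 -> near (depths w1) (depths w2).
Proof.
by case: w1 w2 => [|a [|]] [|b [|]] //= _ _; rewrite /near /depth_step;
  do ?case: eqP.
Qed.

Lemma depths_zeros w :
  all (pred1 0) w -> depths w = (0, nat_of_bool (w != [::])).
Proof. by elim: w => //= a w IHw /andP[/eqP-> /IHw->]. Qed.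

Lemma depths_nonzeros w :
  all (predC1 0) w -> depths w = (nat_of_bool (w != [::]), 0).
Proof.
by elim: w => //= a w IHw /andP[/negbTE nz_a /IHw->]; rewrite /depth_step nz_a.
Qed.

Lemma depths_cons_nonzero a w :
  a != 0 -> depths (a :: w) = ((depths w).2.+1, (depths w).2).
Proof. by rewrite /= /depth_step => /negbTE->. Qed.

Lemma depths_alternating b w :
  (forall j, j < size w -> (nth 0 w j == 0) = (odd j == b)) ->
  depths w = if b then (size w, (size w).-1) else ((size w).-1, size w).
Proof.
elim: w b => [|a w IHw] b alt_w; first by case: (b).
have depths_w :
    depths w = if ~~ b then (size w, (size w).-1) else ((size w).-1, size w).
  by apply: IHw => j lt_jw; rewrite (alt_w j.+1) //=; case: (b); case: (odd j).
rewrite /= -/(depths w) {}depths_w.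
by move: {alt_w}(alt_w 0 isT); rewrite /depth_step /=; case: b; case: eqP.
Qed.

Section Vertices.

Variables n k : nat.
Implicit Types x y : V n k.

Definition word x : seq nat := [seq val (x i) | i <- enum 'I_k].

Definition root_depth x : nat := (depths (word x)).1.
Definition periph_depth x : nat := (depths (word x)).2.

Lemma size_word x : size (word x) = k.
Proof. by rewrite size_map size_enum_ord. Qed.

Lemma nth_word x (j : 'I_k) : nth 0 (word x) j = x j.
Proof. by rewrite (nth_map j) ?size_enum_ord // nth_ord_enum. Qed.

Lemma all_drop_word x p (P : pred nat) :
  (forall j : 'I_k, p <= j -> P (x j)) -> all P (drop p (word x)).
Proof.
move=> P_tail; apply/(all_nthP 0) => i; rewrite size_drop size_word nth_drop => lt_ik.
have lt_pik : p + i < k by rewrite -ltn_subRL.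
by rewrite (nth_word x (Ordinal lt_pik)) P_tail ?leq_addr.
Qed.

Lemma near_depths_split x y p :
  (forall j : 'I_k, j < p -> x j = y j) ->
  near (depths (drop p (word x))) (depths (drop p (word y))) ->
  near (depths (word x)) (depths (word y)).
Proof.
move=> eq_xy near_tail.
have eq_take : take p (word x) = take p (word y).
  apply: (eq_from_nth (x0 := 0)) => [|i]; rewrite !size_take !size_word // => lt_i.
  have [lt_ip lt_ik] : i < p /\ i < k by rewrite -/(minn p k) in lt_i; lia.
  rewrite !nth_take // (nth_word x (Ordinal lt_ik)) (nth_word y (Ordinal lt_ik)).
  by rewrite eq_xy.
rewrite -(cat_take_drop p (word x)) -(cat_take_drop p (word y)) eq_take.
exact: near_depths_cat near_tail.
Qed.

Lemma R1_near x y : R1 x y -> near (depths (word x)) (depths (word y)).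
Proof.
move/forallP=> eq_xy; apply: (@near_depths_split _ _ k.-1) => [j lt_jk|].
  by apply/eqP; move: (eq_xy j); rewrite -ltn_predRL lt_jk.
by apply: near_depths_short; rewrite size_drop size_word; lia.
Qed.

Lemma R2_near x y : R2 x y -> near (depths (word x)) (depths (word y)).
Proof.
case/existsP=> p /andP[lt_p2k /forallP split_xy].
apply: (@near_depths_split _ _ p) => [j lt_jp|].
  by case/andP: (split_xy j) => /implyP/(_ lt_jp)/eqP.
have tail_xy (j : 'I_k) : p <= j -> isz (x j) && ~~ isz (y j).
  by case/andP: (split_xy j) => _ /implyP; apply.
have nonempty (z : V n k) : drop p (word z) != [::].
  by rewrite -size_eq0 size_drop size_word subn_eq0 -ltnNge ltnW.
rewrite depths_zeros ?depths_nonzeros ?nonempty //.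
  by apply: all_drop_word => j /tail_xy /andP[].
by apply: all_drop_word => j /tail_xy /andP[].
Qed.

Lemma R3_near x y : R3 x y -> near (depths (word x)) (depths (word y)).
Proof.
case/existsP=> p /andP[lt_p1k /and4P[nz_xp nz_yp _ /forallP split_xy]].
apply: (@near_depths_split _ _ p) => [j lt_jp|].
  by case/andP: (split_xy j) => /implyP/(_ lt_jp)/eqP.
have zero_tail (z : V n k) : (forall j : 'I_k, p < j -> isz (z j)) ->
    depths (drop p (word z)) = depths (val (z p) :: nseq (k - p.+1) 0).
  move=> tail_z; rewrite (drop_nth 0) ?size_word // nth_word.
  have /all_pred1P-> : all (pred1 0) (drop p.+1 (word z)) by apply: all_drop_word.
  by rewrite size_drop size_word.
have tail_xy (j : 'I_k) : p < j -> isz (x j) && isz (y j).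
  by case/andP: (split_xy j) => _ /implyP; apply.
rewrite !zero_tail => [|j /tail_xy/andP[] //|j /tail_xy/andP[] //].
by rewrite !depths_cons_nonzero // near_refl.
Qed.

Lemma Hadj_near x y : Hadj x y -> near (depths (word x)) (depths (word y)).
Proof.
case/andP=> _ /or4P[/R1_near|/R2_near|/R2_near|/orP[/R3_near|/R3_near]] //;
  by rewrite near_sym.
Qed.

Lemma root_depth_lipschitz : lipschitz (@Hadj n k) root_depth.
Proof. by move=> x y /Hadj_near /and4P[]. Qed.

Lemma periph_depth_lipschitz : lipschitz (@Hadj n k) periph_depth.
Proof. by move=> x y /Hadj_near /and4P[]. Qed.

Lemma root_depth_root (hn : 0 < n) : root_depth (root_vx k hn) = 0.
Proof.
rewrite /root_depth depths_zeros // -(drop0 (word _)).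
by apply: all_drop_word => j _; rewrite ffunE.
Qed.

Lemma periph_depth_periph u : u \in periph n k -> periph_depth u = 0.
Proof.
rewrite inE => /forallP nz_u; rewrite /periph_depth depths_nonzeros // -(drop0 (word _)).
by apply: all_drop_word => j _; apply: nz_u.
Qed.

Lemma Hadj_sym : symmetric (@Hadj n k).
Proof.
move=> x y; rewrite /Hadj eq_sym.
have -> : R1 x y = R1 y x by apply/forallP/forallP => eq_xy j; rewrite eq_sym; apply: eq_xy.
by case: (R1 y x); case: (R2 x y); case: (R2 y x); case: (R3 x y); case: (R3 y x).
Qed.

Lemma Hadj_zero_split x y p :
  p.+2 <= k -> (forall j : 'I_k, j < p -> x j = y j) ->
  (forall j : 'I_k, p <= j -> isz (x j) && ~~ isz (y j)) -> Hadj x y.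
Proof.
move=> lt_p2k eq_xy tail_xy; have lt_pk : p < k by apply: ltnW.
apply/andP; split.
  apply/eqP => /ffunP/(_ (Ordinal lt_pk)) x_eq_y.
  by move: (tail_xy (Ordinal lt_pk) (leqnn p)); rewrite x_eq_y andbN.
apply/orP; right; apply/orP; left; apply/existsP; exists (Ordinal lt_pk); rewrite lt_p2k /=.
apply/forallP => j; apply/andP; split; apply/implyP; last exact: tail_xy.
by move/eq_xy->.
Qed.

Lemma Hadj_last x y :
  x != y -> (forall j : 'I_k, j.+1 < k -> x j = y j) -> Hadj x y.
Proof.
move=> neq_xy eq_xy; rewrite /Hadj neq_xy /R1; apply/orP; left.
by apply/forallP => j; apply/implyP => /eq_xy->.
Qed.

End Vertices.

Section AlternatingWalks.

Variables (n k : nat) (hn : 1 < n) (z : V n k) (b : bool).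
Hypothesis kind_z : forall j : 'I_k, isz (z j) = (odd j == b).

Lemma depths_word_alternating : depths (word z) = if b then (k, k.-1) else (k.-1, k).
Proof.
rewrite (@depths_alternating b) size_word // => j lt_jk.
by rewrite (nth_word z (Ordinal lt_jk)) -(kind_z (Ordinal lt_jk)).
Qed.

Lemma root_depth_alternating : root_depth z = if b then k else k.-1.
Proof. by rewrite /root_depth depths_word_alternating; case: (b). Qed.

Lemma periph_depth_alternating : periph_depth z = if b then k.-1 else k.
Proof. by rewrite /periph_depth depths_word_alternating; case: (b). Qed.

(* [cut_fill s] keeps the first s letters of z and fills the rest with
   letters of the kind (zero or nonzero) opposite to that of z at position s. *)
Definition cut_fill (s : nat) : V n k :=
  [ffun j : 'I_k => if j < s then z j
                    else if odd s == b then Ordinal hn else Ordinal (ltnW hn)].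

Lemma cut_fill_prefix s (j : 'I_k) : j < s -> cut_fill s j = z j.
Proof. by rewrite ffunE => ->. Qed.

Lemma isz_cut_fill s (j : 'I_k) : s <= j -> isz (cut_fill s j) = (odd s != b).
Proof. by rewrite ffunE leqNgt => /negbTE->; case: (odd s == b). Qed.

Lemma isz_cut_fill_succ s (j : 'I_k) : s <= j -> isz (cut_fill s.+1 j) = (odd s == b).
Proof.
rewrite leq_eqVlt => /predU1P[eq_sj|lt_sj].
  by subst s; rewrite cut_fill_prefix // kind_z.
by rewrite isz_cut_fill //=; case: (odd s); case: (b).
Qed.

Lemma cut_fill_edge s : s < k -> Hadj (cut_fill s.+1) (cut_fill s).
Proof.
move=> lt_sk; have agree (j : 'I_k) : j < s -> cut_fill s.+1 j = cut_fill s j.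
  by move=> lt_js; rewrite !cut_fill_prefix // ltnW.
have [lt_s1k|le_ks1] := ltnP s.+1 k.
  case kind_s: (odd s == b).
    apply: Hadj_zero_split lt_s1k agree _ => j le_sj.
    by rewrite isz_cut_fill_succ // isz_cut_fill // kind_s.
  rewrite Hadj_sym; apply: Hadj_zero_split lt_s1k _ _ => [j /agree //|j le_sj].
  by rewrite isz_cut_fill_succ // isz_cut_fill // kind_s.
apply: Hadj_last => [|j lt_j1k]; last by apply: agree; rewrite -ltnS (leq_trans lt_j1k).
apply/eqP => /ffunP/(_ (Ordinal lt_sk))/(congr1 (@isz n)).
by rewrite isz_cut_fill_succ // isz_cut_fill //; case: (odd s == b).
Qed.

Lemma walk_cut_fill t : t <= k -> walk_le (@Hadj n k) (k - t) z (cut_fill t).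
Proof.
move=> le_tk.
have cut_fill_all : cut_fill k = z by apply/ffunP => j; rewrite cut_fill_prefix.
have := @walk_le_path _ (@Hadj n k) (fun i => cut_fill (t + i)) (k - t).
rewrite addn0 subnKC // cut_fill_all; apply => i lt_i.
by rewrite addnS; apply: cut_fill_edge; rewrite -ltn_subRL.
Qed.

Hypothesis k_gt0 : 0 < k.

Lemma alternating_walk_root :
  walk_le (@Hadj n k) (if b then k else k.-1) z (root_vx k (ltnW hn)).
Proof.
have -> : root_vx k (ltnW hn) = cut_fill (~~ b).
  apply/ffunP => j; rewrite !ffunE; case: ifP => [lt_jb|_]; last by case: (b).
  apply: val_inj; apply/eqP; rewrite /= eq_sym -[_ == _]/(isz _) kind_z.
  by move: lt_jb; case: (b) => //=; rewrite ltnS leqn0 => /eqP->.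
move: (walk_cut_fill (leq_trans (leq_b1 (~~ b)) k_gt0)).
by case: (b); rewrite /= ?subn0 ?subn1.
Qed.

Lemma alternating_walk_periph :
  exists2 u, u \in periph n k & walk_le (@Hadj n k) (if b then k.-1 else k) z u.
Proof.
exists (cut_fill b); last first.
  move: (walk_cut_fill (leq_trans (leq_b1 b) k_gt0)).
  by case: (b); rewrite ?subn0 ?subn1.
rewrite inE; apply/forallP => j; have [lt_jb|le_bj] := ltnP j b.
  rewrite cut_fill_prefix // kind_z.
  by move: lt_jb; case: (b) => //=; rewrite ltnS leqn0 => /eqP->.
by rewrite isz_cut_fill //; case: (b).
Qed.

End AlternatingWalks.

Lemma card_V_gt n k : 1 < n -> k < #|V n k|.
Proof. by move=> hn; rewrite card_ffun !card_ord ltn_expl. Qed.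

Theorem mainTheorem7 (n k : nat) (hn : 1 < n) (hk : 1 <= k)
  (z01 z10 : V n k)
  (H01 : forall j : 'I_k, if odd j.+1 then isz (z01 j) else ~~ isz (z01 j))
  (H10 : forall j : 'I_k, if odd j.+1 then ~~ isz (z10 j) else isz (z10 j)) :
  (gdist (@Hadj n k) z01 (root_vx k (ltnW hn)) = k.-1 /\
   gdist_set (@Hadj n k) z10 (periph n k) = k.-1) /\
  (gdist (@Hadj n k) z10 (root_vx k (ltnW hn)) = k /\
   gdist_set (@Hadj n k) z01 (periph n k) = k).
Proof.
have kind01 (j : 'I_k) : isz (z01 j) = (odd j == false).
  by move: (H01 j) => /=; case: (odd j) => /= [/negbTE|] ->.
have kind10 (j : 'I_k) : isz (z10 j) = (odd j == true).
  by move: (H10 j) => /=; case: (odd j) => /= [|/negbTE] ->.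
have le_kV : k <= #|V n k| := ltnW (card_V_gt k hn).
have le_k1V : k.-1 <= #|V n k| := leq_trans (leq_pred k) le_kV.
have [u10 periph_u10 walk10] := alternating_walk_periph hn kind10 hk.
have [u01 periph_u01 walk01] := alternating_walk_periph hn kind01 hk.
split; split.
- apply: gdist_certificate (@root_depth_lipschitz n k) _
    (alternating_walk_root hn kind01 hk) le_k1V.
  by rewrite root_depth_root subn0 (root_depth_alternating kind01).
- apply: gdist_set_certificate (@periph_depth_lipschitz n k) _ periph_u10 walk10 le_k1V.
  by move=> u /periph_depth_periph->; rewrite subn0 (periph_depth_alternating kind10).
- apply: gdist_certificate (@root_depth_lipschitz n k) _
    (alternating_walk_root hn kind10 hk) le_kV.
  by rewrite root_depth_root subn0 (root_depth_alternating kind10).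
- apply: gdist_set_certificate (@periph_depth_lipschitz n k) _ periph_u01 walk01 le_kV.
  by move=> u /periph_depth_periph->; rewrite subn0 (periph_depth_alternating kind01).
Qed.
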